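(* For every $n\geq 8$ with $n\equiv 0,2,8$ or $10 \pmod{16}$, there exists an almost 2-perfect maximum 8-cycle packing of $K_n$.
   Context: An 8-cycle packing of $K_n$ on vertex set $\mathcal{X}$ is a triple $(\mathcal{X},\mathcal{C},\mathcal{L})$ with $\mathcal{C}$ a collection of pairwise edge-disjoint 8-cycles of $K_n$ and leave $\mathcal{L}$ the set of edges in no cycle of $\mathcal{C}$; it is maximum if $|\mathcal{L}|$ is minimum among all 8-cycle packings of $K_n$. For an 8-cycle $C$, an inside 8-cycle of $C$ is an 8-cycle on the same vertex set sharing no edge with $C$. The packing is almost 2-perfect if one can choose for each $C\in\mathcal{C}$ an inside 8-cycle $C'$ such that $(\mathcal{X},\{C'\},\mathcal{L})$ is again an 8-cycle packing with the same leave. *)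

From mathcomp Require Import all_boot.
Set Implicit Arguments. Unset Strict Implicit. Unset Printing Implicit Defensive.

Definition Kedges (n : nat) : {set {set 'I_n}} := [set e : {set 'I_n} | #|e| == 2].

(* An 8-cycle is given by a cyclic sequence of 8 distinct vertices
   (c_0 c_1 ... c_7); its edges are {c_i, c_(i+1 mod 8)}. *)
Definition is_cyc8 (n : nat) (c : 8.-tuple 'I_n) : bool := uniq c.

Definition cedges (n : nat) (c : 8.-tuple 'I_n) : {set {set 'I_n}} :=
  [set [set tnth c i; tnth c (ordS i)] | i : 'I_8].

Definition is_packing (n k : nat) (C : 'I_k -> 8.-tuple 'I_n) : Prop :=
  (forall i, is_cyc8 (C i)) /\
  (forall i j, i != j -> [disjoint cedges (C i) & cedges (C j)]).

Definition leave (n k : nat) (C : 'I_k -> 8.-tuple 'I_n) : {set {set 'I_n}} :=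
  Kedges n :\: \bigcup_(i < k) cedges (C i).

Definition maximum_packing (n k : nat) (C : 'I_k -> 8.-tuple 'I_n) : Prop :=
  is_packing C /\
  forall (k' : nat) (C' : 'I_k' -> 8.-tuple 'I_n),
    is_packing C' -> #|leave C| <= #|leave C'|.

Definition inside8 (n : nat) (c d : 8.-tuple 'I_n) : Prop :=
  [/\ is_cyc8 d, [set x in d] = [set x in c] & [disjoint cedges c & cedges d]].

Definition almost_2perfect (n k : nat) (C : 'I_k -> 8.-tuple 'I_n) : Prop :=
  is_packing C /\
  exists D : 'I_k -> 8.-tuple 'I_n,
    [/\ forall i, inside8 (C i) (D i), is_packing D & leave D = leave C].

(* Write n = 8m + 2r with r in {0, 1}: split 8m vertices into m blocks of eight
   and keep 2r points at infinity.  On each block together with the points at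
   infinity, 3 + 2r small 8-cycles cover every edge except a perfect matching of
   the block and the edge joining the two points at infinity; between two blocks,
   K_{8,8} is the union of four copies of K_{4,4}, each the union of two 8-cycles.
   The leave then has n/2 edges, which is optimal: every vertex has odd degree
   n - 1 in K_n but even degree in a union of cycles, so it lies on a leave edge.
   Each of these small designs has a twin covering the same edges whose i-th cycle
   is an inside cycle of the original i-th cycle; choosing the twin cycles
   everywhere shows that the packing is almost 2-perfect.  The finitely many facts
   about the small designs are checked by computation. *)

From mathcomp Require Import all_boot zify.
Set Implicit Arguments. Unset Strict Implicit. Unset Printing Implicit Defensive.

Lemma ordS8_neq (i : 'I_8) : ordS i != i.
Proof. by case: i => -[|[|[|[|[|[|[|[|]]]]]]]]. Qed.

Lemma ordSS8_neq (i : 'I_8) : ordS (ordS i) != i.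
Proof. by case: i => -[|[|[|[|[|[|[|[|]]]]]]]]. Qed.

Lemma card_bigcup_seq_disjoint (T I : finType) (F : I -> {set T}) (s : seq I) :
  uniq s -> (forall i j, i != j -> [disjoint F i & F j]) ->
  #|\bigcup_(i <- s) F i| = \sum_(i <- s) #|F i|.
Proof.
move=> + disjF; elim: s => [|i s IH] /=; first by rewrite !big_nil cards0.
case/andP=> i_s s_uniq; rewrite !big_cons cardsU -IH //.
suff -> : F i :&: \bigcup_(j <- s) F j = set0 by rewrite cards0 subn0.
apply/setP => x; rewrite !inE; apply/negP => /andP[xFi].
rewrite bigcup_seq => /bigcupP[j js xFj].
have ij : i != j by apply: contra i_s => /eqP ->.
by move: (disjF _ _ ij) => /disjointFr /(_ xFi); rewrite xFj.
Qed.

Lemma card_bigcup_disjoint (T I : finType) (F : I -> {set T}) :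
  (forall i j, i != j -> [disjoint F i & F j]) -> #|\bigcup_i F i| = \sum_i #|F i|.
Proof. exact/card_bigcup_seq_disjoint/index_enum_uniq. Qed.

Section CycleEdges.
Variable n : nat.
Implicit Types (c : 8.-tuple 'I_n) (v : 'I_n) (A : {set {set 'I_n}}).

Definition cedge c (i : 'I_8) : {set 'I_n} := [set tnth c i; tnth c (ordS i)].

Lemma cedgesE c : cedges c = [set cedge c i | i : 'I_8].
Proof. by []. Qed.

Lemma cedge_in c i : cedge c i \in cedges c.
Proof. exact: imset_f. Qed.

Lemma cedge_inj c : uniq c -> injective (cedge c).
Proof.
move=> /tuple_uniqP tnth_inj i j Eij.
have : tnth c i \in cedge c j by rewrite -Eij set21.
have : tnth c (ordS i) \in cedge c j by rewrite -Eij set22.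
rewrite !inE => /orP[/eqP/tnth_inj Sij|/eqP/tnth_inj/ordS_inj //].
case/orP=> /eqP/tnth_inj // ij; move: (ordSS8_neq j).
by rewrite -ij Sij eqxx.
Qed.

Lemma card_cedges c : uniq c -> #|cedges c| = 8.
Proof. by move=> uc; rewrite card_imset ?card_ord //; apply: cedge_inj. Qed.

Lemma cedges_sub_Kedges c : uniq c -> cedges c \subset Kedges n.
Proof.
move=> /tuple_uniqP tnth_inj; apply/subsetP => _ /imsetP[i _ ->].
rewrite inE cards2; case: (tnth c i =P _) => // /tnth_inj Ei.
by move: (ordS8_neq i); rewrite -Ei eqxx.
Qed.

Definition deg A v := #|[set e in A | v \in e]|.

Lemma deg_cedges c v : uniq c -> deg (cedges c) v = 2 * (v \in c).
Proof.
move=> uc; have /tuple_uniqP tnth_inj := uc; rewrite /deg.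
have -> : [set e in cedges c | v \in e] = cedge c @: [set i | v \in cedge c i].
  apply/setP => e; rewrite inE; apply/andP/imsetP => [[/imsetP[i _ ->] vi]|[i]].
    by exists i => //; rewrite inE.
  by rewrite inE => vi ->; rewrite cedge_in.
rewrite card_imset; last exact: cedge_inj.
have [/tnthP[i0 ->]|vNc] := boolP (v \in c); last first.
  rewrite muln0; apply/eqP; rewrite cards_eq0; apply/eqP/setP => i; rewrite !inE.
  by apply/negbTE; apply: contra vNc => /orP[]/eqP ->; apply: mem_tnth.
have -> : [set i | tnth c i0 \in cedge c i] = [set i0; ord_pred i0].
  apply/setP => i; rewrite !inE !(inj_eq tnth_inj) ![i0 == _]eq_sym.
  by rewrite (can2_eq (@ordSK 8) (@ord_predK 8)).
rewrite cards2; case: eqP => // /(congr1 (@ordS 8)); rewrite ord_predK => Ei0.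
by move: (ordS8_neq i0); rewrite Ei0 eqxx.
Qed.

End CycleEdges.

Section LeaveLowerBound.
Variable n : nat.
Implicit Types (v : 'I_n) (A U : {set {set 'I_n}}).

Lemma deg_Kedges v : deg (Kedges n) v = n.-1.
Proof.
rewrite /deg; have -> : [set e in Kedges n | v \in e] = (fun u => [set v; u]) @: [set~ v].
  apply/setP => e; rewrite inE; apply/andP/imsetP => [[]|[u]].
    rewrite inE => /cards2P[x [y [xy ->]]]; rewrite !inE => /orP[]/eqP ->.
      by exists y; rewrite ?inE // eq_sym.
    by exists x; rewrite ?inE // setUC.
  rewrite !inE => uv ->; split; last by rewrite set21.
  by rewrite cards2 (eq_sym v) uv.
rewrite card_in_imset ?cardsC1 ?card_ord // => u w; rewrite !inE => _ wv Euw.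
by have := set22 v w; rewrite -Euw !inE (negbTE wv) => /eqP.
Qed.

Lemma deg_setD A U v : U \subset A -> deg A v = deg (A :\: U) v + deg U v.
Proof.
move=> UA; rewrite /deg -cardsUI.
have -> : [set e in A :\: U | v \in e] :&: [set e in U | v \in e] = set0.
  by apply/setP => e; rewrite !inE; case: (e \in U); rewrite ?andbF.
rewrite cards0 addn0; apply: eq_card => e; rewrite !inE.
by case eU: (e \in U); rewrite ?(subsetP UA e eU) ?andbF ?orbF.
Qed.

Lemma deg_bigcup_disjoint (I : finType) (F : I -> {set {set 'I_n}}) v :
  (forall i j, i != j -> [disjoint F i & F j]) ->
  deg (\bigcup_i F i) v = \sum_i deg (F i) v.
Proof.
move=> disjF; rewrite /deg -card_bigcup_disjoint.
  apply: eq_card => e; rewrite inE; apply/andP/bigcupP => [[/bigcupP[i _ eFi] ve]|[i _]].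
    by exists i; rewrite // inE eFi.
  by rewrite inE => /andP[eFi ve]; split => //; apply/bigcupP; exists i.
move=> i j /disjF; apply: disjointW; by apply/subsetP => e; rewrite inE => /andP[].
Qed.

Lemma sum_deg A : A \subset Kedges n -> \sum_v deg A v = 2 * #|A|.
Proof.
move=> AK; rewrite /deg.
have card_sep v : #|[set e in A | v \in e]| = \sum_(e in A) (v \in e).
  rewrite -sum1_card big_mkcond [RHS]big_mkcond; apply: eq_bigr => e _.
  by rewrite !inE; case: (e \in A); case: (v \in e).
under eq_bigr => v _ do rewrite card_sep.
rewrite exchange_big /= -sum1_card big_distrr /=; apply: eq_bigr => e eA.
have := subsetP AK e eA; rewrite inE muln1 => /eqP <-.
by rewrite -sum1_card [RHS]big_mkcond.
Qed.

Lemma odd_deg_leave k (C : 'I_k -> 8.-tuple 'I_n) v :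
  is_packing C -> odd (deg (leave C) v) = ~~ odd n.
Proof.
move=> [C_uniq C_disj]; set U := \bigcup_(i < k) cedges (C i).
have UK : U \subset Kedges n.
  by apply/bigcupsP => i _; apply/cedges_sub_Kedges/C_uniq.
have even_degU : ~~ odd (deg U v).
  rewrite deg_bigcup_disjoint //; elim/big_ind: _ => // [x y|i _].
    by rewrite oddD => /negbTE -> /negbTE ->.
  by rewrite deg_cedges ?oddM //; apply: C_uniq.
have odd_pred : odd n.-1 = ~~ odd n.
  by rewrite -{2}(prednK (leq_ltn_trans (leq0n v) (ltn_ord v))) /= negbK.
have := deg_setD v UK; rewrite deg_Kedges -/(leave C) => /(congr1 odd).
by rewrite oddD (negbTE even_degU) addbF odd_pred.
Qed.

Lemma leave_lower_bound k (C : 'I_k -> 8.-tuple 'I_n) :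
  ~~ odd n -> is_packing C -> n <= 2 * #|leave C|.
Proof.
move=> n_even packC; rewrite -sum_deg; last exact: subsetDl.
rewrite -{1}(card_ord n) -sum1_card; apply: leq_sum => v _.
by have := odd_deg_leave v packC; rewrite n_even; case: deg.
Qed.

Lemma maximum_packingI k (C : 'I_k -> 8.-tuple 'I_n) :
  ~~ odd n -> is_packing C -> 2 * #|leave C| <= n -> maximum_packing C.
Proof.
move=> n_even packC small_leave; split => // k' C' packC'.
by rewrite -(leq_pmul2l (isT : 0 < 2)) (leq_trans small_leave) ?leave_lower_bound.
Qed.

End LeaveLowerBound.

Lemma almost_2perfectI n k (C D : 'I_k -> 8.-tuple 'I_n) :
  is_packing C -> is_packing D -> (forall i, inside8 (C i) (D i)) ->
  \bigcup_i cedges (D i) = \bigcup_i cedges (C i) -> almost_2perfect C.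
Proof. by move=> packC packD CD sameU; split=> //; exists D; rewrite /leave sameU. Qed.

Lemma sum_ord_ltn w k : \sum_(i < k) (i < w : nat) = minn w k.
Proof. by elim: k => [|k IH]; rewrite ?big_ord0 ?big_ord_recr /= ?IH; lia. Qed.

Lemma sum_ord_gtn g k : \sum_(i < k) (g < i : nat) = k - g.+1.
Proof. by elim: k => [|k IH]; rewrite ?big_ord0 ?big_ord_recr /= ?IH; lia. Qed.

Lemma sum_ord_eqn (g k : nat) : \sum_(i < k) (g == i :> nat : nat) = (g < k).
Proof.
elim: k => [|k IH]; first by rewrite big_ord0.
by rewrite big_ord_recr /= IH; case: eqP; lia.
Qed.

Lemma sum_ord_rev_sub k : \sum_(i < k) (k - i.+1) = 'C(k, 2).
Proof. by rewrite -bin2_sum big_mkord [RHS](reindex_inj rev_ord_inj). Qed.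

Lemma double_bin2 x : 2 * 'C(x, 2) = x * x.-1.
Proof.
elim: x => [|x IH] //; rewrite binS bin1 mulnDr IH.
by case: x {IH} => //= x; lia.
Qed.

Definition label_bound (r : nat) (within : bool) := if within then 8 + 2 * r else 8.

Definition admissible (r : nat) (within : bool) (x y : nat) : bool :=
  [&& x < label_bound r within, y < label_bound r within &
      if within then (x < 8) || (y < 8) else (x < 4) != (y < 4)].

Definition block_pair (m g h c : nat) := [&& g < m, h < m, c < 8 & g <= h].

(* Vertex 8g + p is point p of block g and 8m + j is the point j at infinity.
   An index (g, g, c) names the c-th cycle on block g, where labels x < 8 are the
   block points and labels x >= 8 the points at infinity.  An index (g, h, c) with
   g < h names a cycle of the K_{4,4} between half c/4 of block g (labels x < 4)
   and half (c/2)%2 of block h (labels 4 <= x < 8), the parity of c choosing one of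
   its two cycles. *)
Definition vtx (m g h c x : nat) : nat :=
  if g == h then (if x < 8 then 8 * g + x else 8 * m + (x - 8))
  else if x < 4 then 8 * g + 4 * (c %/ 4) + x
  else 8 * h + 4 * (c %/ 2 %% 2) + (x - 4).

Section Labels.
Variables m r : nat.

Lemma vtx_lt g h c x : block_pair m g h c -> x < label_bound r (g == h) ->
  vtx m g h c x < 8 * m + 2 * r.
Proof.
rewrite /block_pair /label_bound /vtx => /and4P[? ? ? ?].
by case: eqP => ?; case: ifP => *; lia.
Qed.

Lemma vtx_inj g h c x x' : block_pair m g h c ->
  x < label_bound r (g == h) -> x' < label_bound r (g == h) ->
  vtx m g h c x = vtx m g h c x' -> x = x'.
Proof.
rewrite /block_pair /label_bound /vtx => /and4P[? ? ? ?].
by case: eqP => ?; case: ifP; case: ifP => *; lia.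
Qed.

Lemma vtx_copy g h c c' : c %/ 2 = c' %/ 2 -> vtx m g h c =1 vtx m g h c'.
Proof.
move=> Ec x; rewrite /vtx; case: eqP => // _.
by rewrite !(divnMA _ 2 2) Ec.
Qed.

Lemma vtx_edge_inj g h c g' h' c' x y x' y' :
  block_pair m g h c -> block_pair m g' h' c' ->
  admissible r (g == h) x y -> admissible r (g' == h') x' y' ->
  vtx m g h c x = vtx m g' h' c' x' -> vtx m g h c y = vtx m g' h' c' y' ->
  [/\ g = g', h = h', (g == h) || (c %/ 2 == c' %/ 2), x = x' & y = y'].
Proof.
rewrite /block_pair /admissible /label_bound /vtx => /and4P[? ? ? ?] /and4P[? ? ? ?].
case: (g =P h) => ?; case: (g' =P h') => ? /and3P[? ? ?] /and3P[? ? ?];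
  by do 4!case: ifP => ?; split; rewrite ?eqxx //; lia.
Qed.

End Labels.

Lemma admissibleC r within x y : admissible r within x y = admissible r within y x.
Proof. by rewrite /admissible andbCA orbC; case: within; rewrite // eq_sym. Qed.

(* [i.+1 %% 8] is the value of [ordS i]. *)
Definition tedge (t : seq nat) (i : nat) := (nth 0 t i, nth 0 t (i.+1 %% 8)).

Definition same_edge (p q : nat * nat) := (p == q) || (p == (q.2, q.1)).

Lemma same_edge_set (T : finType) (f : nat -> T) p q : same_edge p q ->
  [set f p.1; f p.2] = [set f q.1; f q.2].
Proof. by case/orP=> /eqP -> //=; rewrite setUC. Qed.

Lemma all_iotaP (P : pred nat) k i : all P (iota 0 k) -> i < k -> P i.
Proof. by move=> /allP P_all ik; apply: P_all; rewrite mem_iota. Qed.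

Definition cycle_ok r within (t : seq nat) :=
  [&& size t == 8, uniq t &
      all (fun i => admissible r within (tedge t i).1 (tedge t i).2) (iota 0 8)].

Definition edge_disjoint (F : seq (seq nat)) :=
  all (fun l => all (fun l' => (l == l') || all (fun i => all (fun j =>
    ~~ same_edge (tedge (nth [::] F l) i) (tedge (nth [::] F l') j))
    (iota 0 8)) (iota 0 8)) (iota 0 (size F))) (iota 0 (size F)).

Definition share_no_edge (t t' : seq nat) :=
  all (fun i => all (fun j => ~~ same_edge (tedge t i) (tedge t' j)) (iota 0 8)) (iota 0 8).

Definition inside_family (F F' : seq (seq nat)) :=
  (size F' == size F) &&
  all (fun l => [&& all (mem (nth [::] F' l)) (nth [::] F l),
                    all (mem (nth [::] F l)) (nth [::] F' l) &
                    share_no_edge (nth [::] F l) (nth [::] F' l)]) (iota 0 (size F)).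

Definition covers (F F' : seq (seq nat)) :=
  all (fun l => all (fun i => has (fun l' => has (fun j =>
    same_edge (tedge (nth [::] F' l) i) (tedge (nth [::] F l') j)) (iota 0 8))
    (iota 0 (size F))) (iota 0 8)) (iota 0 (size F')).

Lemma edge_disjointP F l l' i j : edge_disjoint F -> l < size F -> l' < size F ->
  i < 8 -> j < 8 -> same_edge (tedge (nth [::] F l) i) (tedge (nth [::] F l') j) -> l = l'.
Proof.
move=> disjF lF l'F i8 j8 Eij.
have /orP[/eqP //|disj_ll'] := all_iotaP (all_iotaP disjF lF) l'F.
by have := all_iotaP (all_iotaP disj_ll' i8) j8; rewrite Eij.
Qed.

Lemma coversP F F' l i : covers F F' -> l < size F' -> i < 8 ->
  exists l' j, [/\ l' < size F, j < 8 &
    same_edge (tedge (nth [::] F' l) i) (tedge (nth [::] F l') j)].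
Proof.
move=> covF lF i8; have /hasP[l' + /hasP[j + Eij]] := all_iotaP (all_iotaP covF lF) i8.
by rewrite !mem_iota => l'F j8; exists l', j.
Qed.

Record design := Design { within : seq (seq nat); crossing : seq (seq nat) }.

Definition design_ok r D :=
  [&& size (within D) <= 8, size (crossing D) == 2,
      all (cycle_ok r true) (within D), all (cycle_ok r false) (crossing D)
    & edge_disjoint (within D) && edge_disjoint (crossing D)].

(* The i-th cycle of [D'] is an inside cycle of the i-th cycle of [D], and the two
   designs cover the same edges. *)
Definition twin_designs r D D' :=
  [&& design_ok r D, design_ok r D', inside_family (within D) (within D'),
      inside_family (crossing D) (crossing D'), covers (within D) (within D'),
      covers (within D') (within D), covers (crossing D) (crossing D')
    & covers (crossing D') (crossing D)].

Section Construction.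
Variables n m r : nat.
Hypothesis n_eq : n.+1 = 8 * m + 2 * r.
Hypothesis r_le1 : r <= 1.

Definition Idx := ('I_m * 'I_m * 'I_8)%type.
Implicit Types (s : Idx) (D : design).

Definition sg s : nat := s.1.1.
Definition sh s : nat := s.1.2.
Definition sc s : nat := s.2.

Definition valid_idx w s := if sg s == sh s then sc s < w else sg s < sh s.

Definition template D s :=
  if sg s == sh s then nth [::] (within D) (sc s) else nth [::] (crossing D) (sc s %% 2).

Definition vertex s x : 'I_n.+1 := inord (vtx m (sg s) (sh s) (sc s) x).

Definition cyc D s : 8.-tuple 'I_n.+1 :=
  [tuple vertex s (nth 0 (template D s) i) | i < 8].

Lemma cedge_cyc D s i :
  cedge (cyc D s) i =
  [set vertex s (tedge (template D s) i).1; vertex s (tedge (template D s) i).2].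
Proof. by rewrite /cedge !tnth_mktuple. Qed.

Lemma valid_block_pair w s : valid_idx w s -> block_pair m (sg s) (sh s) (sc s).
Proof.
rewrite /valid_idx /block_pair !ltn_ord /=.
by case: eqP => [->|_ /ltnW ->].
Qed.

Lemma val_vertex w s x : valid_idx w s -> x < label_bound r (sg s == sh s) ->
  vertex s x = vtx m (sg s) (sh s) (sc s) x :> nat.
Proof. by move=> /valid_block_pair ? ?; rewrite inordK // n_eq vtx_lt. Qed.

Section OneDesign.
Variable D : design.
Hypothesis D_ok : design_ok r D.
Let w := size (within D).

Lemma template_ok s : valid_idx w s -> cycle_ok r (sg s == sh s) (template D s).
Proof.
case/and5P: D_ok => _ /eqP K2 /allP W_ok /allP K_ok _.
rewrite /valid_idx /template; case: eqP => _ s_ok.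
  by apply: W_ok; rewrite mem_nth.
by apply: K_ok; rewrite mem_nth // K2 ltn_mod.
Qed.

Lemma template_admissible s i : valid_idx w s -> i < 8 ->
  admissible r (sg s == sh s) (tedge (template D s) i).1 (tedge (template D s) i).2.
Proof. by move=> /template_ok /and3P[_ _ t_adm]; apply: all_iotaP t_adm. Qed.

Lemma template_bound s i : valid_idx w s -> i < 8 ->
  nth 0 (template D s) i < label_bound r (sg s == sh s).
Proof. by move=> s_ok i8; case/and3P: (template_admissible s_ok i8). Qed.

Lemma cyc_uniq s : valid_idx w s -> uniq (cyc D s).
Proof.
move=> s_ok; have /and3P[/eqP t8 t_uniq _] := template_ok s_ok.
apply/tuple_uniqP => i j; rewrite !tnth_mktuple => /(congr1 (@nat_of_ord _)).
rewrite !(val_vertex s_ok) ?template_bound //.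
have bound k := template_bound s_ok (ltn_ord k).
move=> /(vtx_inj (valid_block_pair s_ok) (bound i) (bound j)) /eqP.
by rewrite nth_uniq ?t8 // => /eqP/val_inj.
Qed.

End OneDesign.

Lemma cedge_cyc_eq D D' s s' i j : design_ok r D -> design_ok r D' ->
  valid_idx (size (within D)) s -> valid_idx (size (within D')) s' ->
  cedge (cyc D s) i = cedge (cyc D' s') j ->
  [/\ sg s = sg s', sh s = sh s', (sg s == sh s) || (sc s %/ 2 == sc s' %/ 2)
    & same_edge (tedge (template D s) i) (tedge (template D' s') j)].
Proof.
move=> D_ok D'_ok s_ok s'_ok; rewrite !cedge_cyc.
have xy : vertex s (tedge (template D s) i).1 != vertex s (tedge (template D s) i).2.
  have /tuple_uniqP cyc_inj := cyc_uniq D_ok s_ok.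
  apply: contra (ordS8_neq i) => /eqP Exy.
  by rewrite -(inj_eq cyc_inj) !tnth_mktuple; apply/eqP; symmetry; apply: Exy.
move: xy (template_admissible D_ok s_ok (ltn_ord i)) (template_admissible D'_ok s'_ok (ltn_ord j)).
case: (tedge (template D s) i) => x y; case: (tedge (template D' s') j) => x' y' /= xy adm adm' E.
have [/and3P[bx b_y _] /and3P[bx' by' _]] := (adm, adm').
have vtx_eq a a' : a < label_bound r (sg s == sh s) ->
    a' < label_bound r (sg s' == sh s') -> vertex s a = vertex s' a' ->
    vtx m (sg s) (sh s) (sc s) a = vtx m (sg s') (sh s') (sc s') a'.
  move=> ba ba' /(congr1 (@nat_of_ord _)).
  by rewrite (val_vertex s_ok) ?(val_vertex s'_ok).
have := valid_block_pair s_ok; have := valid_block_pair s'_ok => bp' bp.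
have : vertex s x \in [set vertex s' x'; vertex s' y'] by rewrite -E set21.
have : vertex s y \in [set vertex s' x'; vertex s' y'] by rewrite -E set22.
rewrite !inE => /orP[]/eqP Ey /orP[]/eqP Ex; try by rewrite Ex Ey eqxx in xy.
- rewrite admissibleC in adm'.
  have [-> -> ? -> ->] :=
    vtx_edge_inj bp bp' adm adm' (vtx_eq _ _ bx by' Ex) (vtx_eq _ _ b_y bx' Ey).
  by split; rewrite // /same_edge eqxx orbT.
have [-> -> ? -> ->] :=
  vtx_edge_inj bp bp' adm adm' (vtx_eq _ _ bx bx' Ex) (vtx_eq _ _ b_y by' Ey).
by split; rewrite // /same_edge eqxx.
Qed.

Lemma mem_cyc D s y : design_ok r D -> valid_idx (size (within D)) s ->
  (y \in cyc D s) = (y \in map (vertex s) (template D s)).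
Proof.
move=> D_ok /(template_ok D_ok) /and3P[/eqP t8 _ _].
apply/tnthP/mapP => [[i ->]|[x xt ->]].
  by exists (nth 0 (template D s) i); rewrite ?tnth_mktuple // mem_nth ?t8.
have ix : index x (template D s) < 8 by rewrite -t8 index_mem.
by exists (Ordinal ix); rewrite tnth_mktuple nth_index.
Qed.

Lemma idx_eq s s' : sg s = sg s' -> sh s = sh s' -> sc s = sc s' -> s = s'.
Proof.
case: s s' => [[g h] c] [[g' h'] c']; rewrite /sg /sh /sc /=.
by move=> /val_inj -> /val_inj -> /val_inj ->.
Qed.

Lemma cyc_disjoint D s s' : design_ok r D ->
  valid_idx (size (within D)) s -> valid_idx (size (within D)) s' -> s != s' ->
  [disjoint cedges (cyc D s) & cedges (cyc D s')].
Proof.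
move=> D_ok s_ok s'_ok neq_ss'; rewrite -setI_eq0; apply/eqP/setP => e.
rewrite !inE.
apply/negP => /andP[/imsetP[i _ ->] /imsetP[j _ /(cedge_cyc_eq D_ok D_ok s_ok s'_ok)]].
case=> eg eh copy_eq Eij; case/negP: neq_ss'; apply/eqP/idx_eq => //.
have /and5P[_ /eqP K2 _ _ /andP[W_disj K_disj]] := D_ok.
move: s_ok s'_ok Eij copy_eq; rewrite /valid_idx /template -eg -eh.
case: eqP => _ s_ok s'_ok Eij.
  by move=> _; apply: (edge_disjointP W_disj s_ok s'_ok (ltn_ord i) (ltn_ord j) Eij).
move=> /eqP c2; rewrite (divn_eq (sc s) 2) (divn_eq (sc s') 2) c2.
by rewrite (edge_disjointP K_disj _ _ (ltn_ord i) (ltn_ord j) Eij) // K2 ltn_mod.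
Qed.

Definition idx_set w : {set Idx} := [set s | valid_idx w s].

Definition packing_of w D : 'I_#|idx_set w| -> 8.-tuple 'I_n.+1 :=
  fun i => cyc D (enum_val i).
Arguments packing_of : clear implicits.

Lemma valid_enum_val w (i : 'I_#|idx_set w|) : valid_idx w (enum_val i).
Proof. by have := enum_valP i; rewrite inE. Qed.

Lemma packing_of_is_packing D :
  design_ok r D -> is_packing (packing_of (size (within D)) D).
Proof.
move=> D_ok; split=> [i|i j neq_ij]; first exact/cyc_uniq/valid_enum_val.
apply: cyc_disjoint; rewrite ?valid_enum_val //.
by apply: contra neq_ij => /eqP/enum_val_inj ->.
Qed.

Lemma cyc_inside D D' s : twin_designs r D D' -> valid_idx (size (within D)) s ->
  inside8 (cyc D s) (cyc D' s).
Proof.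
case/and5P=> D_ok D'_ok /andP[/eqP sizeW insW] /andP[_ insK] _ s_ok.
have s'_ok : valid_idx (size (within D')) s by rewrite sizeW.
have /and3P[/allP sub /allP sub' no_share] :
    [&& all (mem (template D' s)) (template D s), all (mem (template D s)) (template D' s)
      & share_no_edge (template D s) (template D' s)].
  move: s_ok; rewrite /valid_idx /template; case: eqP => _ s_ok.
    exact: all_iotaP insW s_ok.
  by apply: all_iotaP insK _; have /and5P[_ /eqP -> _ _ _] := D_ok; rewrite ltn_mod.
split; first by rewrite /is_cyc8 (cyc_uniq D'_ok s'_ok).
  apply/setP => y; rewrite !inE (mem_cyc _ D_ok) // (mem_cyc _ D'_ok) //.
  by apply/mapP/mapP => -[x xt ->]; exists x => //; [apply: sub' | apply: sub].
rewrite -setI_eq0; apply/eqP/setP => e; rewrite !inE.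
apply/negP => /andP[/imsetP[i _ ->] /imsetP[j _ E]].
have [_ _ _ Eij] := cedge_cyc_eq D_ok D'_ok s_ok s'_ok E.
by have := all_iotaP (all_iotaP no_share (ltn_ord i)) (ltn_ord j); rewrite Eij.
Qed.

Lemma covering_idx E E' s (j0 : 'I_8) : design_ok r E -> design_ok r E' ->
  covers (within E) (within E') -> covers (crossing E) (crossing E') ->
  valid_idx (size (within E')) s ->
  exists s2 (j : 'I_8), [/\ s2 \in idx_set (size (within E)), vertex s2 =1 vertex s
    & same_edge (tedge (template E' s) j0) (tedge (template E s2) j)].
Proof.
move=> /and5P[W8 /eqP K2 _ _ _] /and5P[_ /eqP K2' _ _ _] covW covK.
rewrite /valid_idx /template; case: eqP => [gh s_ok|/eqP gh s_ok].
  have [l [j [lW j8 Ej]]] := coversP covW s_ok (ltn_ord j0).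
  have l8 : l < 8 by apply: leq_trans W8.
  exists (s.1, Ordinal l8), (Ordinal j8); rewrite inE /valid_idx /template /sg /sh /sc /=.
  rewrite -/(sg s) -/(sh s) gh eqxx; split => // x.
  by move: gh; rewrite /vertex /vtx /sg /sh /= => ->; rewrite eqxx.
have c_lt2 : sc s %% 2 < size (crossing E') by rewrite K2' ltn_mod.
have [l [j [lK j8 Ej]]] := coversP covK c_lt2 (ltn_ord j0).
have c2_lt8 : 2 * (sc s %/ 2) + l < 8.
  by rewrite K2 in lK; rewrite /sc; have := ltn_ord s.2; lia.
exists (s.1, Ordinal c2_lt8), (Ordinal j8); rewrite inE /valid_idx /template /sg /sh /sc /=.
rewrite -/(sg s) -/(sh s) (negbTE gh); split => // [x|].
  by congr inord; apply: vtx_copy; rewrite K2 in lK; rewrite /sc /=; lia.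
by have -> : (2 * (sc s %/ 2) + l) %% 2 = l by rewrite K2 in lK; lia.
Qed.

Lemma cyc_cedges_sub E E' s : design_ok r E -> design_ok r E' ->
  covers (within E) (within E') -> covers (crossing E) (crossing E') ->
  valid_idx (size (within E')) s ->
  cedges (cyc E' s) \subset \bigcup_(s2 in idx_set (size (within E))) cedges (cyc E s2).
Proof.
move=> E_ok E'_ok covW covK s_ok; rewrite cedgesE; apply/subsetP => _ /imsetP[j0 _ ->].
have [s2 [j [s2_in same_vtx Ej]]] := covering_idx j0 E_ok E'_ok covW covK s_ok.
apply/bigcupP; exists s2 => //.
by rewrite cedge_cyc (same_edge_set (vertex s) Ej) -!same_vtx -cedge_cyc cedge_in.
Qed.

Lemma bigcup_packing_of w D :
  \bigcup_i cedges (packing_of w D i) = \bigcup_(s in idx_set w) cedges (cyc D s).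
Proof. by rewrite (big_enum_val (fun s => cedges (cyc D s))). Qed.

Lemma bigcup_twins D D' : twin_designs r D D' ->
  \bigcup_i cedges (packing_of (size (within D)) D' i) =
  \bigcup_i cedges (packing_of (size (within D)) D i).
Proof.
case/and5P=> D_ok D'_ok /andP[/eqP sizeW _] _ /and4P[covW covW' covK covK'].
rewrite !bigcup_packing_of; apply/eqP; rewrite eqEsubset.
apply/andP; split; apply/bigcupsP => s; rewrite inE => s_ok.
  by apply: cyc_cedges_sub; rewrite ?sizeW.
by rewrite -sizeW; apply: cyc_cedges_sub; rewrite ?sizeW.
Qed.

Lemma card_idx_set w : w <= 8 -> #|idx_set w| = m * w + 8 * 'C(m, 2).
Proof.
move=> w8; have -> : #|idx_set w| = \sum_s (valid_idx w s : nat).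
  by rewrite -sum1_card big_mkcond; apply: eq_bigr => s _; rewrite inE; case: valid_idx.
rewrite -(pair_bigA _ (fun gh (c : 'I_8) => (valid_idx w (gh, c) : nat))) /=.
rewrite -(pair_bigA _ (fun g h : 'I_m => \sum_(c < 8) (valid_idx w (g, h, c) : nat))) /=.
rewrite (eq_bigr (fun g : 'I_m => w + 8 * (m - g.+1))) => [|g _].
  by rewrite big_split /= sum_nat_const card_ord -big_distrr /= sum_ord_rev_sub.
rewrite (eq_bigr (fun h : 'I_m => w * (g == h :> nat) + 8 * (g < h))) => [|h _].
  by rewrite big_split /= -!big_distrr /= sum_ord_gtn sum_ord_eqn ltn_ord muln1.
rewrite /valid_idx /sg /sh /sc /=.
case: eqP => [<-|/eqP neq_gh]; last by rewrite sum_nat_const card_ord; lia.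
by rewrite sum_ord_ltn ltnn muln1 muln0 addn0; apply/minn_idPl.
Qed.

Lemma card_leave_packing D : design_ok r D -> size (within D) = 3 + 2 * r ->
  2 * #|leave (packing_of (size (within D)) D)| = n.+1.
Proof.
move=> D_ok sizeW; have [C_uniq C_disj] := packing_of_is_packing D_ok.
have UK : \bigcup_i cedges (packing_of (size (within D)) D i) \subset Kedges n.+1.
  by apply/bigcupsP => i _; apply/cedges_sub_Kedges/C_uniq.
rewrite /leave cardsDS // card_bigcup_disjoint //.
rewrite (eq_bigr (fun _ => 8)) => [|i _]; last exact/card_cedges/C_uniq.
rewrite sum_nat_const card_ord card_idx_set sizeW; last by case: r r_le1 => [|[]].
rewrite /Kedges card_draws card_ord n_eq.
have := double_bin2 m; have := double_bin2 (8 * m + 2 * r).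
by case: r r_le1 => [|[|//]] _; case: m => [|m'] //=; nia.
Qed.

Lemma twin_designs_packing D D' : size (within D) = 3 + 2 * r -> twin_designs r D D' ->
  exists k (C : 'I_k -> 8.-tuple 'I_n.+1), maximum_packing C /\ almost_2perfect C.
Proof.
move=> sizeW twins; have /and5P[D_ok D'_ok /andP[/eqP sizeW' _] _ _] := twins.
have packC := packing_of_is_packing D_ok.
exists _, (packing_of (size (within D)) D); split.
  apply: maximum_packingI packC _; first by rewrite n_eq oddD !oddM.
  by rewrite card_leave_packing.
apply: (almost_2perfectI packC (D := packing_of (size (within D)) D')).
- by rewrite -sizeW'; apply: packing_of_is_packing.
- by move=> i; apply/cyc_inside/valid_enum_val.
- exact: bigcup_twins.
Qed.

End Construction.

Definition design0 := Design
  [:: [:: 0;2;1;3;4;6;5;7]; [:: 0;3;5;1;6;2;7;4]; [:: 0;5;2;4;1;7;3;6]]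
  [:: [:: 0;4;1;5;2;6;3;7]; [:: 0;5;3;4;2;7;1;6]].

Definition design0' := Design
  [:: [:: 0;3;5;1;6;2;7;4]; [:: 0;5;2;4;1;7;3;6]; [:: 0;2;1;3;4;6;5;7]]
  [:: [:: 0;5;3;4;2;7;1;6]; [:: 0;4;1;5;2;6;3;7]].

Definition design1 := Design
  [:: [:: 1;3;7;8;5;9;6;4]; [:: 0;4;9;7;5;6;2;8]; [:: 0;5;2;9;3;8;1;7];
      [:: 0;2;7;4;3;6;1;9]; [:: 0;3;5;1;2;4;8;6]]
  (crossing design0).

Definition design1' := Design
  [:: [:: 1;6;5;7;9;4;3;8]; [:: 0;5;9;2;7;4;8;6]; [:: 0;2;8;7;3;5;1;9];
      [:: 0;3;9;6;4;2;1;7]; [:: 0;4;1;3;6;2;5;8]]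
  (crossing design0').

Lemma twin_designs0 : twin_designs 0 design0 design0'.
Proof. by vm_compute. Qed.

Lemma twin_designs1 : twin_designs 1 design1 design1'.
Proof. by vm_compute. Qed.

Theorem lemma3p9 (n : nat) :
  8 <= n -> n %% 16 \in [:: 0; 2; 8; 10] ->
  exists (k : nat) (C : 'I_k -> 8.-tuple 'I_n),
    maximum_packing C /\ almost_2perfect C.
Proof.
case: n => [//|n] _; rewrite !inE => n_mod.
have [n_mod8|n_mod8] : n.+1 %% 8 = 0 \/ n.+1 %% 8 = 2 by case/or4P: n_mod => /eqP; lia.
  by apply: (twin_designs_packing (m := n.+1 %/ 8) _ _ _ twin_designs0) => //; lia.
by apply: (twin_designs_packing (m := n.+1 %/ 8) _ _ _ twin_designs1) => //; lia.
Qed.
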